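(* During or after the execution of $\mathit{find\_ap\_set}$, let $xy$ be an edge of $H$ both of whose endpoints are even. If both $x$ and $y$ have been completely scanned, then $x$ and $y$ belong to the same blossom.
   Context: Let $H$ be a finite undirected graph with a matching $M_H$ (free vertices, $\mathit{mate}$, alternating and augmenting paths as usual). The procedure $\mathit{find\_ap\_set}$ maintains a search structure $S$ (a forest of alternating trees whose nodes are odd vertices and blossoms = sets of even vertices with a base; $b(x)$ denotes the base of the blossom containing an even vertex $x$) and a set $\mathit{CP}$ of vertex-disjoint augmenting paths, both initially empty. For each free vertex $f$ in turn: if $f$ is not on a path of $\mathit{CP}$, add $f$ to $S$ as the root of a new tree (a trivial even blossom) and call $\mathit{find\_ap}(f)$. The recursive call $\mathit{find\_ap}(x)$, for $x$ even, scans each non-matching edge $xy$ in turn: if $y\notin S$ and $y$ is free, add $xy$ to $S$, add the path formed by the canonical path of $x$ followed by $y$ to $\mathit{CP}$, and terminate every currently executing call of $\mathit{find\_ap}$ (the outer loop then continues with the next free vertex); if $y\notin S$ and $y$ is matched (grow step), add $y$ as odd child of $b(x)$ and $y'=\mathit{mate}(y)$ as even child of $y$, and call $\mathit{find\_ap}(y')$; if $y\in S$ and $b(y)$ is even and a proper descendant of $b(x)$ in $S$ (blossom step), let $u_1,\dots,u_k$ be the odd vertices on the tree path from $b(x)$ to $b(y)$ with $u_1$ closest to $b(x)$, merge all blossoms and odd vertices on this path into one blossom with base $b(x)$ (so $u_1,\dots,u_k$ become even), and call $\mathit{find\_ap}(u_1),\dots,\mathit{find\_ap}(u_k)$ in this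 order; otherwise do nothing. Vertices in $S$ remain in $S$ between trees. An even vertex $x$ is completely scanned if $\mathit{find\_ap}(x)$ has been called and was not terminated prematurely (so all non-matching edges at $x$ have been scanned). *)

From mathcomp Require Import all_boot.
Set Implicit Arguments. Unset Strict Implicit. Unset Printing Implicit Defensive.

Section FindApSet.
Variable T : finType.
Variable e : rel T.
Variable mate : T -> option T. (* the matching M_H: mate x = None iff x is free *)

Definition is_matching : Prop :=
  forall x y, mate x = Some y -> mate y = Some x /\ e x y.

Definition nonmatch_nbrs (x : T) : {set T} :=
  [set y | e x y & mate x != Some y].

(* Items of the recursion stack: an executing call find_ap(x) that still has
   the non-matching edges to the vertices of A to scan, or a pending call
   find_ap(u) (scheduled by a blossom step, not yet started). *)
Inductive frame := Scan of T & {set T} | Call of T.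

Record state := St {
  inS    : {set T};
  evn    : {set T};       (* even vertices of S (odd = inS :\: evn) *)
  base   : T -> T;        (* b(x): base of the blossom of an even vertex x *)
  par    : T -> T;        (* for an odd vertex y: the even vertex x such that
                             y was added as child of b(x) via the edge xy *)
  cpv    : {set T};       (* the vertices lying on paths of CP *)
  called : {set T};
  done   : {set T};       (* completely scanned vertices *)
  todo   : {set T};       (* free vertices not yet treated by the outer loop *)
  stack  : seq frame      (* currently executing calls, top first *)
}.

Definition init_state : state :=
  St set0 set0 id id set0 set0 set0 [set f | mate f == None] [::].

Definition upd (f : T -> T) (A : {set T}) (v : T) : T -> T :=
  fun z => if z \in A then v else f z.

(* [bs] = [:: B_0; ...; B_k] are the bases of the blossoms on the tree path
   from b(x) = B_0 down to b(y) = B_k, and [us] = [:: u_1; ...; u_k] the odd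
   vertices on it (u_1 closest to b(x)); u_i is the parent of blossom B_i
   (u_i = mate B_i) and the child of blossom B_{i-1}.  Its existence with
   k >= 1 means b(y) is a proper descendant of b(x). *)
Definition tree_chain (st : state) (x y : T) (bs us : seq T) : Prop :=
  [/\ 0 < size us, size bs = (size us).+1,
      head y bs = base st x, last x bs = base st y &
      forall i, i < size us ->
        [/\ mate (nth y bs i.+1) = Some (nth y us i),
            nth y us i \in inS st :\: evn st,
            base st (par st (nth y us i)) = nth y bs i,
            nth y bs i.+1 \in evn st &
            base st (nth y bs i.+1) = nth y bs i.+1]].

Inductive step : state -> state -> Prop :=
(* outer loop: next free vertex f, not on a path of CP: new tree rooted at f,
   call find_ap(f) *)
| step_root st f :
    stack st = [::] -> f \in todo st -> f \notin cpv st ->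
    step st (St (f |: inS st) (f |: evn st) (upd (base st) [set f] f) (par st)
                (cpv st) (f |: called st) (done st) (todo st :\ f)
                [:: Scan f (nonmatch_nbrs f)])
| step_skip_root st f :
    stack st = [::] -> f \in todo st -> f \in cpv st ->
    step st (St (inS st) (evn st) (base st) (par st) (cpv st) (called st)
                (done st) (todo st :\ f) [::])
| step_call st u s :
    stack st = Call u :: s ->
    step st (St (inS st) (evn st) (base st) (par st) (cpv st) (u |: called st)
                (done st) (todo st) (Scan u (nonmatch_nbrs u) :: s))
| step_return st x A s :
    stack st = Scan x A :: s -> A = set0 ->
    step st (St (inS st) (evn st) (base st) (par st) (cpv st) (called st)
                (x |: done st) (todo st) s)
(* scanning xy, y not in S and free: augmenting path found; P is the vertex
   set of (canonical path of x) followed by y; all calls are terminated *)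
| step_augment st x A s y (P : {set T}) :
    stack st = Scan x A :: s -> y \in A -> y \notin inS st -> mate y = None ->
    x \in P -> y \in P -> P \subset y |: inS st ->
    step st (St (y |: inS st) (evn st) (base st) (upd (par st) [set y] x)
                (cpv st :|: P) (called st) (done st) (todo st) [::])
| step_grow st x A s y y' :
    stack st = Scan x A :: s -> y \in A -> y \notin inS st -> mate y = Some y' ->
    step st (St (y' |: (y |: inS st)) (y' |: evn st)
                (upd (base st) [set y'] y') (upd (par st) [set y] x)
                (cpv st) (y' |: called st) (done st) (todo st)
                (Scan y' (nonmatch_nbrs y') :: Scan x (A :\ y) :: s))
| step_blossom st x A s y bs us :
    stack st = Scan x A :: s -> y \in A -> y \in inS st -> y \in evn st ->
    tree_chain st x y bs us ->
    let merged := [set z | ((z \in evn st) && (base st z \in bs)) || (z \in us)] in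
    step st (St (inS st) (evn st :|: [set u in us])
                (upd (base st) merged (base st x)) (par st)
                (cpv st) (called st) (done st) (todo st)
                (map Call us ++ Scan x (A :\ y) :: s))
| step_nothing st x A s y :
    stack st = Scan x A :: s -> y \in A -> y \in inS st ->
    ~ (y \in evn st /\ exists bs us, tree_chain st x y bs us) ->
    step st (St (inS st) (evn st) (base st) (par st) (cpv st) (called st)
                (done st) (todo st) (Scan x (A :\ y) :: s)).

Inductive reachable : state -> Prop :=
| reach_init : reachable init_state
| reach_step st st' : reachable st -> step st st' -> reachable st'.

End FindApSet.

From mathcomp Require Import all_boot.
From Stdlib Require List.
Set Implicit Arguments. Unset Strict Implicit. Unset Printing Implicit Defensive.

(* The proof is an invariant of all reachable states.  Besides the shape of the
   search forest (following parents of blossoms leads to a free root, and the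
   vertices of the active calls lie on one path towards a root), it records what
   is known about scanned edges.  If v has scanned vw, w is even and
   b(w) <> b(v), then w is not completely scanned, and if w is on the call stack
   then b(w) is an ancestor of b(v) and every active call find_ap(w) has still
   to scan wv; scanning wv from that ancestor is a blossom step, which merges
   the two blossoms.  A companion invariant on edges scanned towards odd
   vertices keeps this true when a blossom step makes odd vertices even.  For an
   edge between two completely scanned even vertices only b(x) = b(y) is left. *)

Section FindApInvariants.
Variables (T : finType) (e : rel T) (mate : T -> option T).
Hypotheses (e_sym : symmetric e) (e_irr : irreflexive e) (hM : is_matching e mate).

Definition is_base (st : state T) (C : T) := (C \in evn st) && (base st C == C).

(* The parent blossom is reached through the odd vertex mate C; a root blossom
   is its own parent. *)
Definition parent_base (st : state T) (C : T) : T :=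
  if mate C is Some u then base st (par st u) else C.

Definition tree_anc (st : state T) (A C : T) := exists k, iter k (parent_base st) C = A.

Definition frame_vertex (f : frame T) := match f with Scan v _ => v | Call v => v end.

Definition stack_vertices (st : state T) := map frame_vertex (stack st).

Fixpoint ancestor_chain (st : state T) (l : seq T) : Prop :=
  if l is f :: s then (forall g, g \in s -> tree_anc st (base st g) (base st f)) /\
                      ancestor_chain st s
  else True.

Definition scanned (st : state T) (v w : T) :=
  w \in nonmatch_nbrs e mate v /\
  (v \in done st \/ exists A, List.In (Scan v A) (stack st) /\ w \notin A).

Record forest_inv (st : state T) : Prop := {
  even_in_tree : forall z, z \in evn st -> z \in inS st;
  base_is_base : forall z, z \in evn st -> is_base st (base st z);
  base_mate : forall B, is_base st B -> mate B = None \/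
    exists2 u, mate B = Some u & (u \in inS st) && (u \notin evn st);
  odd_par_even : forall u, u \in inS st -> u \notin evn st -> par st u \in evn st;
  tree_mate_closed : forall z z', z \in inS st -> mate z = Some z' -> z' \in inS st;
  done_even : forall z, z \in done st -> z \in evn st;
  stack_even : forall z, z \in stack_vertices st -> z \in evn st;
  todo_free : forall f, f \in todo st -> mate f = None;
  todo_tree_cpv : forall f, f \in todo st -> f \in inS st -> f \in cpv st;
  parent_base_reaches_root : forall C, is_base st C ->
    exists k, mate (iter k (parent_base st) C) = None;
  even_mates_same_base : forall z z', z \in evn st -> mate z = Some z' ->
    z' \in evn st -> base st z = base st z' }.

Record scan_inv (st : state T) : Prop := {
  scanned_in_tree : forall v w, scanned st v w -> w \in inS st;
  stack_ancestor_chain : ancestor_chain st (stack_vertices st);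
  scanned_even_edge : forall v w, scanned st v w -> w \in evn st ->
    base st w != base st v ->
    w \notin done st /\ (w \notin stack_vertices st \/
      (tree_anc st (base st w) (base st v) /\
       forall A, List.In (Scan w A) (stack st) -> v \in A));
  scanned_odd_edge : forall v w, scanned st v w -> w \in inS st -> w \notin evn st ->
    forall g, g \in stack_vertices st ->
    tree_anc st (base st g) (base st (par st w)) -> tree_anc st (base st g) (base st v) }.

Definition find_ap_inv st := forest_inv st /\ scan_inv st.

Lemma tree_anc_refl st A : tree_anc st A A.
Proof. by exists 0. Qed.

Lemma tree_anc_trans st A B C : tree_anc st A B -> tree_anc st B C -> tree_anc st A C.
Proof. by move=> [k1 <-] [k2 <-]; exists (k1 + k2); rewrite iterD. Qed.

Lemma tree_anc_parent st A C : tree_anc st A (parent_base st C) -> tree_anc st A C.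
Proof. by move=> [k <-]; exists k.+1; rewrite iterSr. Qed.

Lemma iter_parent_base_root st R k : mate R = None -> iter k (parent_base st) R = R.
Proof. by move=> hR; elim: k => //= k ->; rewrite /parent_base hR. Qed.

Lemma ancestor_chain_head st x l g : ancestor_chain st (x :: l) -> g \in x :: l ->
  tree_anc st (base st g) (base st x).
Proof.
by move=> [H _]; rewrite inE => /orP [/eqP ->|/H //]; apply: tree_anc_refl.
Qed.

Lemma ancestor_chain_transfer st st' l :
  (forall f g, f \in l -> g \in l -> tree_anc st (base st g) (base st f) ->
     tree_anc st' (base st' g) (base st' f)) ->
  ancestor_chain st l -> ancestor_chain st' l.
Proof.
elim: l => //= a l IH H [H1 H2]; split.
  by move=> g hg; apply: H; rewrite ?inE ?eqxx ?hg ?orbT //; apply: H1.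
by apply: IH => // f g hf hg; apply: H; rewrite inE ?hf ?hg orbT.
Qed.

Lemma ancestor_chain_cat st (B : T) l1 l2 :
  (forall f, f \in l1 -> base st f = B) ->
  (forall g, g \in l1 ++ l2 -> tree_anc st (base st g) B) ->
  ancestor_chain st l2 -> ancestor_chain st (l1 ++ l2).
Proof.
elim: l1 => //= a l1 IH hB hA hs; split.
  by move=> g hg; rewrite (hB a) ?inE ?eqxx //; apply: hA; rewrite inE hg orbT.
apply: IH => // [f hf|g hg]; [apply: hB | apply: hA]; by rewrite inE ?hf ?hg orbT.
Qed.

Lemma mate_sym x y : mate x = Some y -> mate y = Some x.
Proof. by move/hM=> []. Qed.

Lemma mate_inj x y z : mate x = Some z -> mate y = Some z -> x = y.
Proof. by move=> /mate_sym h1 /mate_sym h2; congruence. Qed.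

Lemma nonmatch_nbrs_sym v w :
  w \in nonmatch_nbrs e mate v -> v \in nonmatch_nbrs e mate w.
Proof.
rewrite !inE => /andP [evw hm]; rewrite e_sym evw /=.
by apply/eqP => /mate_sym hw; rewrite hw eqxx in hm.
Qed.

Lemma frame_vertex_in (f : frame T) l : List.In f l -> frame_vertex f \in map frame_vertex l.
Proof. by elim: l => //= g l IH [->|/IH H]; rewrite inE ?eqxx ?H ?orbT. Qed.

Lemma scanned_transfer st st' (removed : T -> T -> Prop) :
  done st' \subset done st ->
  (forall v B, List.In (Scan v B) (stack st') -> B = nonmatch_nbrs e mate v \/
     exists2 A, List.In (Scan v A) (stack st) &
       forall w, w \notin B -> w \notin A \/ removed v w) ->
  forall v w, scanned st' v w -> scanned st v w \/ removed v w.
Proof.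
move=> sub_done hframes v w [hw [vD|[B [hB wB]]]].
  by left; split => //; left; apply: (subsetP sub_done).
case: (hframes _ _ hB) => [hBv|[A hA /(_ _ wB) [wA|]]]; last by right.
  by rewrite hBv hw in wB.
by left; split => //; right; exists A.
Qed.

Lemma scanned_transfer_mono st st' :
  done st' \subset done st ->
  (forall v B, List.In (Scan v B) (stack st') ->
     B = nonmatch_nbrs e mate v \/ List.In (Scan v B) (stack st)) ->
  forall v w, scanned st' v w -> scanned st v w.
Proof.
move=> sub_done hframes v w /(@scanned_transfer st st' (fun _ _ => False) sub_done) [] //.
by move=> u B /hframes [->|hB]; [left | right; exists B => // z ->; left].
Qed.

Section AfterScan.
Variables (st st' : state T) (x y : T) (A : {set T}) (s pre : seq (frame T)).
Hypotheses (hs : stack st = Scan x A :: s) (hs' : stack st' = pre ++ Scan x (A :\ y) :: s)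
  (hpre : forall v B, List.In (Scan v B) pre -> B = nonmatch_nbrs e mate v).

Lemma in_stack_after_scan v B : List.In (Scan v B) (stack st') ->
  [\/ B = nonmatch_nbrs e mate v, v = x /\ B = A :\ y | List.In (Scan v B) s].
Proof.
rewrite hs' => /List.in_app_iff [/hpre|[[-> <-]|]]; by [constructor 1|constructor 2|constructor 3].
Qed.

Lemma scanned_after_scan : done st' = done st ->
  forall v w, scanned st' v w -> scanned st v w \/ (v = x /\ w = y).
Proof.
move=> hdone; apply: scanned_transfer; first by rewrite hdone.
move=> v B /in_stack_after_scan [->|[-> ->]|hB]; [by left | right; exists A | right; exists B].
- by rewrite hs; left.
- by move=> w; rewrite !inE negb_and negbK => /orP [/eqP ->|->]; [right | left].
- by rewrite hs; right.
- by move=> w ->; left.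
Qed.

End AfterScan.

Section ForestFacts.
Variable st : state T.
Hypothesis I : forest_inv st.

Lemma parent_base_is_base C : is_base st C -> is_base st (parent_base st C).
Proof.
move=> hC; rewrite /parent_base.
by case: (base_mate I hC) => [->|[u -> /andP [uS uE]]] //; apply/(base_is_base I)/(odd_par_even I).
Qed.

Lemma iter_parent_base_is_base k C : is_base st C -> is_base st (iter k (parent_base st) C).
Proof. by move=> hC; elim: k => //= k IH; apply: parent_base_is_base. Qed.

Lemma tree_anc_is_base A C : is_base st C -> tree_anc st A C -> is_base st A.
Proof. by move=> hC [k <-]; apply: iter_parent_base_is_base. Qed.

Lemma scanned_even v w : scanned st v w -> v \in evn st.
Proof.
move=> [_ [/(done_even I) //|[A [hA _]]]].
exact/(stack_even I)/(frame_vertex_in hA).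
Qed.

Lemma iter_parent_base_agree st' :
  (forall C, is_base st C -> parent_base st' C = parent_base st C) ->
  forall k C, is_base st C -> iter k (parent_base st') C = iter k (parent_base st) C.
Proof.
move=> hpar; elim=> //= k IH C hC.
by rewrite IH // hpar //; apply: iter_parent_base_is_base.
Qed.

Lemma tree_anc_agree st' A C :
  (forall C, is_base st C -> parent_base st' C = parent_base st C) ->
  is_base st C -> tree_anc st' A C <-> tree_anc st A C.
Proof.
move=> hpar hC; rewrite /tree_anc.
by split=> -[k hk]; exists k; rewrite -hk (iter_parent_base_agree hpar).
Qed.

(* The path is read off the iterates of [parent_base] from b(y), taking the
   least number of steps to b(x), so that no blossom on it is a root. *)
Lemma tree_chain_of_anc x y : x \in evn st -> y \in evn st ->
  tree_anc st (base st x) (base st y) -> base st x != base st y ->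
  exists bs us, tree_chain mate st x y bs us.
Proof.
move=> xE yE hanc hne.
set C := base st y.
have hC : is_base st C := base_is_base I yE.
have exP : exists k, iter k (parent_base st) C == base st x.
  by case: hanc => k hk; exists k; rewrite hk.
case: (ex_minnP exP) => k /eqP hk hmin.
have nonroot j : j < k -> exists u, mate (iter j (parent_base st) C) = Some u.
  move=> jk; case hm: (mate (iter j (parent_base st) C)) => [u|]; first by exists u.
  have : iter k (parent_base st) C = iter j (parent_base st) C.
    by rewrite -(subnK (ltnW jk)) iterD iter_parent_base_root.
  by rewrite hk => /esym/eqP/hmin; rewrite leqNgt jk.
pose bs := [seq iter (k - i) (parent_base st) C | i <- iota 0 k.+1].
pose us := [seq odflt y (mate (iter (k - i.+1) (parent_base st) C)) | i <- iota 0 k].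
exists bs, us.
have szus : size us = k by rewrite size_map size_iota.
have szbs : size bs = k.+1 by rewrite size_map size_iota.
have nbs d i : i < k.+1 -> nth d bs i = iter (k - i) (parent_base st) C.
  by move=> ik; rewrite (nth_map 0) ?size_iota // nth_iota.
have nus i : i < k -> nth y us i = odflt y (mate (iter (k - i.+1) (parent_base st) C)).
  by move=> ik; rewrite (nth_map 0) ?size_iota // nth_iota.
split.
- by rewrite szus lt0n; apply: contra_neq hne => k0; rewrite -hk k0.
- by rewrite szus szbs.
- by rewrite -nth0 nbs // subn0.
- by rewrite -nth_last szbs /= nbs // subnn.
move=> i; rewrite szus => ik.
rewrite nus // !nbs //; last by apply: ltnW.
have hj : k - i.+1 < k by rewrite ltn_subrL (leq_ltn_trans (leq0n i) ik).
have [u hu] := nonroot _ hj; rewrite hu /=.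
have hD := iter_parent_base_is_base (k - i.+1) hC.
case/andP: (hD) => DE /eqP Dbase.
have [hr|[u' hu' /andP [uS uE]]] := base_mate I hD; first by rewrite hr in hu.
rewrite hu' in hu; case: hu => <-.
split=> //; first by rewrite inE uS uE.
by rewrite -subnSK // iterS /parent_base hu'.
Qed.

Lemma scanned_done_same_base x y : scan_inv st -> e x y -> x \in evn st -> y \in evn st ->
  x \in done st -> y \in done st -> base st x = base st y.
Proof.
move=> J exy xE yE xD yD.
case hm: (mate x == Some y); first exact: (even_mates_same_base I xE (eqP hm) yE).
have hsc : scanned st x y by split; [rewrite inE exy hm | left].
case: (eqVneq (base st y) (base st x)) => [//|hne].
by have [] := scanned_even_edge J hsc yE hne; rewrite yD.
Qed.

End ForestFacts.

Lemma inv_init : find_ap_inv (init_state mate).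
Proof.
have nsc v w : ~ scanned (init_state mate) v w by move=> [_ [|[A []]]]; rewrite ?inE.
split; split; rewrite /is_base /stack_vertices //=.
all: try by move=> z; rewrite inE.
all: try by move=> z z'; rewrite inE.
all: try by move=> v w /nsc.
by move=> f; rewrite inE => /eqP.
Qed.

Lemma inv_skip_root st f : find_ap_inv st ->
  find_ap_inv (St (inS st) (evn st) (base st) (par st) (cpv st) (called st)
                  (done st) (todo st :\ f) [::]).
Proof.
move=> [I J]; set st' := St _ _ _ _ _ _ _ _ _.
have hsc : forall v w, scanned st' v w -> scanned st v w.
  by apply: scanned_transfer_mono => //= v B [].
case: (I) => *; case: (J) => *.
split; split => //=.
- by move=> g; rewrite !inE => /andP [_ /(todo_free I)].
- by move=> g; rewrite !inE => /andP [_ /(todo_tree_cpv I)].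
- by move=> v w /hsc /(scanned_in_tree J).
- by move=> v w /hsc h wE hne; have [h1 _] := scanned_even_edge J h wE hne; split => //; left.
Qed.

Lemma inv_call st u s : find_ap_inv st -> stack st = Call u :: s ->
  find_ap_inv (St (inS st) (evn st) (base st) (par st) (cpv st) (u |: called st)
                  (done st) (todo st) (Scan u (nonmatch_nbrs e mate u) :: s)).
Proof.
move=> [I J] hs; set st' := St _ _ _ _ _ _ _ _ _.
have hf : stack_vertices st' = stack_vertices st by rewrite /stack_vertices /= hs.
have hsc : forall v w, scanned st' v w -> scanned st v w.
  apply: scanned_transfer_mono => //= v B [[-> <-]|hB]; first by left.
  by right; rewrite hs; right.
case: (I) => *; case: (J) => *.
split; split => //.
- by rewrite hf.
- by move=> v w /hsc /(scanned_in_tree J).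
- by rewrite hf; apply: (ancestor_chain_transfer _ (stack_ancestor_chain J)).
- move=> v w h wE hne; have [h1 h2] := scanned_even_edge J (hsc _ _ h) wE hne; split => //.
  case: h2 => [h2|[h3 h4]]; [left; by rewrite hf | right; split => //].
  move=> A [[hw hA]|hA]; last by apply: h4; rewrite hs; right.
  by subst; apply/nonmatch_nbrs_sym/(hsc _ _ h).1.
- by move=> v w h wS wE g; rewrite hf; apply: (scanned_odd_edge J (hsc _ _ h) wS wE).
Qed.

Lemma inv_return st x A s : find_ap_inv st -> stack st = Scan x A :: s -> A = set0 ->
  find_ap_inv (St (inS st) (evn st) (base st) (par st) (cpv st) (called st)
                  (x |: done st) (todo st) s).
Proof.
move=> [I J] hs hA; set st' := St _ _ _ _ _ _ _ _ _.
have hf : stack_vertices st = x :: stack_vertices st' by rewrite /stack_vertices /= hs.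
have hsc v w : scanned st' v w -> scanned st v w.
  move=> [h1 [h2|[B [hB hw]]]]; split => //.
    case/setU1P: h2 => [->|h2]; last by left.
    by right; exists A; rewrite hs hA inE; split => //; left.
  by right; exists B; rewrite hs; split => //; right.
have xE : x \in evn st by apply: (stack_even I); rewrite hf inE eqxx.
case: (I) => *; case: (J) => *.
split; split => //.
- by move=> z /setU1P [->|/(done_even I)].
- by move=> z hz; apply: (stack_even I); rewrite hf inE hz orbT.
- by move=> v w /hsc /(scanned_in_tree J).
- by move: (stack_ancestor_chain J); rewrite hf => -[_]; apply: ancestor_chain_transfer.
- move=> v w h wE hne; have [h1 h2] := scanned_even_edge J (hsc _ _ h) wE hne.
  have wx : w != x.
    apply/eqP => wx; subst w; case: h2 => [|[_ h4]]; first by rewrite hf inE eqxx.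
    by have := h4 A; rewrite hs hA inE => /(_ (or_introl erefl)).
  split; first by rewrite !inE negb_or wx.
  case: h2 => [h2|[h3 h4]]; [left | right; split => //].
    by move: h2; rewrite hf inE negb_or => /andP [].
  by move=> B hB; apply: h4; rewrite hs; right.
- move=> v w h wS wE g hg; apply: (scanned_odd_edge J (hsc _ _ h) wS wE (g := g)).
  by rewrite hf inE hg orbT.
Qed.

Section NothingStep.
Variables (st : state T) (x : T) (A : {set T}) (s : seq (frame T)) (y : T).
Hypotheses (I : forest_inv st) (J : scan_inv st) (hs : stack st = Scan x A :: s)
  (yS : y \in inS st)
  (hnc : ~ (y \in evn st /\ exists bs us, tree_chain mate st x y bs us)).

Let st' := St (inS st) (evn st) (base st) (par st) (cpv st) (called st)
              (done st) (todo st) (Scan x (A :\ y) :: s).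

Lemma nothing_stack_vertices : stack_vertices st' = stack_vertices st.
Proof. by rewrite /stack_vertices /= hs. Qed.

Lemma nothing_stack_old : stack_vertices st = x :: map frame_vertex s.
Proof. by rewrite /stack_vertices hs. Qed.

Lemma nothing_stack_chain : ancestor_chain st (x :: map frame_vertex s).
Proof. by rewrite -nothing_stack_old; apply: (stack_ancestor_chain J). Qed.

Lemma nothing_scanned v w : scanned st' v w -> scanned st v w \/ (v = x /\ w = y).
Proof. exact: (@scanned_after_scan st st' x y A s [::] hs erefl (fun _ _ => False_ind _)). Qed.

(* If y had scanned yx, [scanned_even_edge] would put the active x above y,
   and the step would have been a blossom step. *)
Lemma nothing_scanned_yx : scanned st y x -> base st x = base st y.
Proof.
move=> h; apply/eqP/negPn/negP => hne; have yE := scanned_even I h.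
have xE : x \in evn st by apply: (stack_even I); rewrite nothing_stack_old inE eqxx.
have [_ [|[ha _]]] := scanned_even_edge J h xE hne.
  by rewrite nothing_stack_old inE eqxx.
by apply: hnc; split => //; apply: tree_chain_of_anc.
Qed.

Lemma nothing_scanned_xy : y \in nonmatch_nbrs e mate x -> y \in evn st ->
  base st y != base st x ->
  y \notin done st /\ (y \notin stack_vertices st' \/
    (tree_anc st (base st y) (base st x) /\
     forall B, List.In (Scan y B) (stack st') -> x \in B)).
Proof.
move=> /nonmatch_nbrs_sym xy yE hne.
have not_yx : ~ scanned st y x by move/nothing_scanned_yx/esym/eqP; rewrite (negbTE hne).
split; first by apply: contra_notN not_yx => yD; split => //; left.
rewrite nothing_stack_vertices.
case: (boolP (y \in stack_vertices st)) => [yF|]; last by left.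
right; split; first by apply: (ancestor_chain_head nothing_stack_chain); rewrite -nothing_stack_old.
move=> B [[yx _]|hB]; first by rewrite yx eqxx in hne.
apply: contra_notT not_yx => xB; split => //.
by right; exists B; rewrite hs; split => //; right.
Qed.

Lemma nothing_scanned_old v w : scanned st v w -> w \in evn st -> base st w != base st v ->
  w \notin done st /\ (w \notin stack_vertices st' \/
    (tree_anc st (base st w) (base st v) /\
     forall B, List.In (Scan w B) (stack st') -> v \in B)).
Proof.
move=> h wE hne.
have [h1 [h2|[h3 h4]]] := scanned_even_edge J h wE hne; split => //.
  by left; rewrite nothing_stack_vertices.
right; split => // B [[wx <-]|hB]; last by apply: h4; rewrite hs; right.
have := h4 A; rewrite hs -wx => /(_ (or_introl erefl)) vA.
rewrite !inE vA andbT; apply: contraTneq hne => vy.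
by move: h; rewrite -wx vy => /nothing_scanned_yx ->; rewrite eqxx.
Qed.

Lemma inv_nothing : find_ap_inv st'.
Proof.
split.
  case: (I) => *; split => //.
  by rewrite nothing_stack_vertices.
split.
- by move=> v w /nothing_scanned [/(scanned_in_tree J) //|[_ ->]].
- rewrite nothing_stack_vertices.
  exact: (ancestor_chain_transfer _ (stack_ancestor_chain J)).
- move=> v w h; case: (nothing_scanned h) => [h'|[vx wy]]; first exact: nothing_scanned_old.
  by move: h => [hw _]; rewrite vx wy in hw *; apply: nothing_scanned_xy.
- move=> v w h wS wE g; rewrite nothing_stack_vertices => hg.
  case: (eqVneq v x) => [->|vx] ha.
    by apply: (ancestor_chain_head nothing_stack_chain); rewrite -nothing_stack_old.
  case: (nothing_scanned h) => [h'|[/eqP]]; last by rewrite (negbTE vx).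
  exact: (scanned_odd_edge J h' wS wE hg ha).
Qed.

End NothingStep.

Lemma inv_augment st x A s y (P : {set T}) : find_ap_inv st -> stack st = Scan x A :: s ->
  y \notin inS st -> mate y = None -> y \in P ->
  find_ap_inv (St (y |: inS st) (evn st) (base st) (upd (par st) [set y] x)
                  (cpv st :|: P) (called st) (done st) (todo st) [::]).
Proof.
move=> [I J] hs yS my yP; set st' := St _ _ _ _ _ _ _ _ _.
have xE : x \in evn st by apply: (stack_even I); rewrite /stack_vertices hs inE eqxx.
have hpar C : is_base st C -> parent_base st' C = parent_base st C.
  move=> hC; rewrite /parent_base /=.
  case: (base_mate I hC) => [->|[u -> /andP [uS _]]] //.
  rewrite /upd inE; case: (eqVneq u y) => [uy|//].
  by subst; rewrite uS in yS.
have hsc : forall v w, scanned st' v w -> scanned st v w.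
  by apply: scanned_transfer_mono => //= v B [].
case: (I) => *; case: (J) => *.
split; split => //=.
- by move=> z /(even_in_tree I) hz; rewrite inE hz orbT.
- move=> B hB; case: (base_mate I hB) => [->|[u hu /andP [uS uE]]]; first by left.
  by right; exists u => //; rewrite inE uS orbT uE.
- move=> u; rewrite /upd !inE => /orP [/eqP ->|uS] uE; first by rewrite eqxx.
  by case: (eqVneq u y) => [uy|uy] //; apply: (odd_par_even I).
- move=> z z'; rewrite !inE => /orP [/eqP ->|zS]; first by rewrite my.
  by move/(tree_mate_closed I zS) ->; rewrite orbT.
- move=> f hf; rewrite !inE => /orP [/eqP ->|fS]; first by rewrite yP orbT.
  by rewrite (todo_tree_cpv I).
- move=> C hC; have [k hk] := parent_base_reaches_root I hC; exists k.
  by rewrite (iter_parent_base_agree _ hpar).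
- by move=> v w /hsc /(scanned_in_tree J) hw; rewrite inE hw orbT.
- by move=> v w /hsc h wE hne; have [h1 _] := scanned_even_edge J h wE hne; split => //; left.
Qed.

Section RootStep.
Variables (st : state T) (f : T).
Hypotheses (I : forest_inv st) (ft : f \in todo st) (fc : f \notin cpv st).

Let st' := St (f |: inS st) (f |: evn st) (upd (base st) [set f] f) (par st)
              (cpv st) (f |: called st) (done st) (todo st :\ f)
              [:: Scan f (nonmatch_nbrs e mate f)].

Lemma root_notin_tree : f \notin inS st.
Proof. by apply: contra fc; apply: (todo_tree_cpv I ft). Qed.

Lemma root_neq z : z \in inS st -> z != f.
Proof. by move=> zS; apply: contraNneq root_notin_tree => <-. Qed.

Lemma root_base_old z : z \in inS st -> base st' z = base st z.
Proof. by move=> /root_neq zf; rewrite /= /upd inE (negbTE zf). Qed.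

Lemma root_is_base_old C : is_base st C -> is_base st' C.
Proof.
move=> /andP [CE /eqP Cb]; apply/andP; split; first by rewrite /= inE CE orbT.
by rewrite root_base_old ?Cb // (even_in_tree I).
Qed.

Lemma root_is_base_new C : is_base st' C -> C = f \/ is_base st C.
Proof.
rewrite /is_base /= /upd !inE; case: (eqVneq C f) => [->|Cf] /=; first by left.
by move=> /andP [CE Cb]; right; rewrite CE.
Qed.

Lemma root_parent_base_old C : is_base st C -> parent_base st' C = parent_base st C.
Proof.
move=> hC; rewrite /parent_base; case: (base_mate I hC) => [->|[u -> /andP [uS uE]]] //.
by rewrite root_base_old //; apply/(even_in_tree I)/(odd_par_even I).
Qed.

Lemma forest_inv_root : forest_inv st'.
Proof.
have mf : mate f = None by apply: (todo_free I).
split => //=.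
- by move=> z; rewrite !inE => /orP [->|/(even_in_tree I) ->]; rewrite ?orbT.
- move=> z; rewrite in_setU1 => /orP [/eqP ->|zE]; first by rewrite /is_base /= /upd !inE !eqxx.
  change (is_base st' (base st' z)).
  by rewrite root_base_old ?(even_in_tree I) //; apply/root_is_base_old/(base_is_base I).
- move=> B /root_is_base_new [->|hB]; first by left.
  case: (base_mate I hB) => [|[u hu /andP [uS uE]]]; first by left.
  right; exists u => //.
  by rewrite !inE uS orbT (negbTE uE) (negbTE (root_neq uS)).
- move=> u; rewrite !inE negb_or => /orP [/eqP ->|uS]; first by rewrite eqxx.
  by move=> /andP [_ uE]; rewrite (odd_par_even I) ?orbT.
- move=> z z'; rewrite !inE => /orP [/eqP ->|zS]; first by rewrite mf.
  by move/(tree_mate_closed I zS) ->; rewrite orbT.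
- by move=> z /(done_even I) h; rewrite inE h orbT.
- by move=> z; rewrite /stack_vertices /= !inE => /eqP ->; rewrite eqxx.
- by move=> g; rewrite inE => /andP [_ /(todo_free I)].
- move=> g; rewrite !inE => /andP [gf gt] /orP [/eqP gf'|gS]; last exact: (todo_tree_cpv I).
  by rewrite gf' eqxx in gf.
- move=> C /root_is_base_new [->|hC]; first by exists 0.
  have [k hk] := parent_base_reaches_root I hC.
  by exists k; rewrite (iter_parent_base_agree I root_parent_base_old).
- move=> z z'; rewrite !inE => /orP [/eqP ->|zE]; first by rewrite mf.
  move=> hm /orP [/eqP zf|z'E]; first by subst; move: (mate_sym hm); rewrite mf.
  change (base st' z = base st' z').
  by rewrite !root_base_old ?(even_in_tree I) //; apply: (even_mates_same_base I).
Qed.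

Lemma scan_inv_root : scan_inv st -> scan_inv st'.
Proof.
have hsc : forall v w, scanned st' v w -> scanned st v w.
  apply: scanned_transfer_mono => //= v B [[-> <-]|[]]; by left.
move=> J; case: (J) => *; split => //=.
- by move=> v w /hsc /(scanned_in_tree J) hw; rewrite inE hw orbT.
- move=> v w h; have h' := hsc _ _ h; have wS := scanned_in_tree J h'.
  have vS : v \in inS st by apply: (even_in_tree I); apply: (scanned_even I h').
  move=> wE0 hne0.
  have wE : w \in evn st by move: wE0; rewrite in_setU1 (negbTE (root_neq wS)).
  have hne : base st w != base st v by rewrite -!root_base_old.
  have [h1 _] := scanned_even_edge J h' wE hne; split => //; left.
  by rewrite /stack_vertices /= inE (root_neq wS).
- move=> v w h wS wE g; rewrite /stack_vertices /= inE => /eqP -> {g}.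
  have h' := hsc _ _ h; have wS' := scanned_in_tree J h'.
  have wE' : w \notin evn st by move: wE; rewrite inE negb_or => /andP [].
  have hp : is_base st (base st (par st w)) by apply/(base_is_base I)/(odd_par_even I).
  (* f is a fresh root, so it is an ancestor of nothing but itself *)
  change (tree_anc st' (base st' f) (base st' (par st w)) ->
          tree_anc st' (base st' f) (base st' v)).
  rewrite (root_base_old (even_in_tree I (odd_par_even I wS' wE'))).
  move/(tree_anc_agree I _ root_parent_base_old hp) => /(tree_anc_is_base I hp).
  rewrite /= /upd inE eqxx => /andP [fE _].
  by move: root_notin_tree; rewrite (even_in_tree I fE).
Qed.

End RootStep.

Section GrowStep.
Variables (st : state T) (x : T) (A : {set T}) (s : seq (frame T)) (y y' : T).
Hypotheses (I : forest_inv st) (hs : stack st = Scan x A :: s)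
  (yS : y \notin inS st) (my : mate y = Some y').

Let st' := St (y' |: (y |: inS st)) (y' |: evn st) (upd (base st) [set y'] y')
              (upd (par st) [set y] x) (cpv st) (y' |: called st) (done st) (todo st)
              (Scan y' (nonmatch_nbrs e mate y') :: Scan x (A :\ y) :: s).

Lemma grow_stack_vertices : stack_vertices st' = y' :: stack_vertices st.
Proof. by rewrite /stack_vertices /= hs. Qed.

Lemma grow_x_even : x \in evn st.
Proof. by apply: (stack_even I); rewrite /stack_vertices hs inE eqxx. Qed.

Lemma grow_mate' : mate y' = Some y.
Proof. exact: mate_sym. Qed.

Lemma grow_y'_notin_tree : y' \notin inS st.
Proof. by apply: contra yS => /(tree_mate_closed I) /(_ grow_mate'). Qed.

Lemma grow_neq : y != y'.
Proof. by apply/eqP => yy; have [_] := hM my; rewrite -yy e_irr. Qed.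

Lemma grow_neq_y z : z \in inS st -> z != y.
Proof. by move=> zS; apply: contraNneq yS => <-. Qed.

Lemma grow_neq_y' z : z \in inS st -> z != y'.
Proof. by move=> zS; apply: contraNneq grow_y'_notin_tree => <-. Qed.

Lemma grow_base_old z : z \in inS st -> base st' z = base st z.
Proof. by move=> /grow_neq_y' zy; rewrite /= /upd inE (negbTE zy). Qed.

Lemma grow_par_old z : z \in inS st -> par st' z = par st z.
Proof. by move=> /grow_neq_y zy; rewrite /= /upd inE (negbTE zy). Qed.

Lemma grow_base_new : base st' y' = y'.
Proof. by rewrite /= /upd inE eqxx. Qed.

Lemma grow_is_base_old C : is_base st C -> is_base st' C.
Proof.
move=> /andP [CE /eqP Cb]; apply/andP; split; first by rewrite /= inE CE orbT.
by rewrite grow_base_old ?Cb // (even_in_tree I).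
Qed.

Lemma grow_is_base_new C : is_base st' C -> C = y' \/ is_base st C.
Proof.
move=> /andP [CE Cb]; case: (eqVneq C y') => [|Cy]; first by left.
have CE' : C \in evn st by move: CE; rewrite /= in_setU1 (negbTE Cy).
by right; rewrite /is_base CE' -(grow_base_old (even_in_tree I CE')).
Qed.

Lemma grow_parent_base_old C : is_base st C -> parent_base st' C = parent_base st C.
Proof.
move=> hC; rewrite /parent_base; case: (base_mate I hC) => [->|[u -> /andP [uS uE]]] //.
by rewrite grow_par_old // grow_base_old //; apply/(even_in_tree I)/(odd_par_even I).
Qed.

Lemma grow_parent_base_new : parent_base st' y' = base st x.
Proof.
rewrite /parent_base grow_mate' /= /upd !inE eqxx.
by rewrite (negbTE (grow_neq_y' (even_in_tree I grow_x_even))).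
Qed.

Lemma grow_tree_anc_old A0 C : is_base st C -> tree_anc st A0 C -> tree_anc st' A0 C.
Proof. by move=> hC; rewrite (tree_anc_agree I _ grow_parent_base_old hC). Qed.

Lemma forest_inv_grow : forest_inv st'.
Proof.
have xE := grow_x_even; have yy' := grow_neq; have my' := grow_mate'.
split.
- by move=> z; rewrite /= !inE => /orP [->|/(even_in_tree I) ->]; rewrite ?orbT.
- move=> z; rewrite /= in_setU1 => /orP [/eqP ->|zE]; first by rewrite /is_base /= /upd !inE !eqxx.
  change (is_base st' (base st' z)).
  by rewrite grow_base_old ?(even_in_tree I) //; apply/grow_is_base_old/(base_is_base I).
- move=> B /grow_is_base_new [->|hB].
    right; exists y => //; rewrite /= !inE eqxx orbT /= negb_or (negbTE yy') /=.
    by apply: contra yS => /(even_in_tree I).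
  case: (base_mate I hB) => [->|[u hu /andP [uS uE]]]; first by left.
  right; exists u => //; rewrite /= !inE uS !orbT /= negb_or (negbTE uE) andbT.
  exact: grow_neq_y' uS.
- move=> u; rewrite /= !inE negb_or => /orP [/eqP ->|]; first by rewrite eqxx.
  case/orP => [/eqP ->|uS] /andP [uy' uE]; first by rewrite /upd inE eqxx /= xE orbT.
  by rewrite /upd inE (negbTE (grow_neq_y uS)) /= (odd_par_even I) ?orbT.
- move=> z z'; rewrite /= !inE => /orP [/eqP ->|/orP [/eqP ->|zS]].
  + by rewrite my' => -[<-]; rewrite eqxx orbT.
  + by rewrite my => -[<-]; rewrite eqxx.
  + by move/(tree_mate_closed I zS) => ->; rewrite !orbT.
- by move=> z /(done_even I) h; rewrite /= inE h orbT.
- by move=> z; rewrite grow_stack_vertices !inE => /orP [->|/(stack_even I) ->]; rewrite ?orbT.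
- exact: (todo_free I).
- move=> f ft; rewrite /= !inE => /orP [/eqP fy'|/orP [/eqP fy|fS]]; last exact: (todo_tree_cpv I).
  + by move: (todo_free I ft); rewrite fy' my'.
  + by move: (todo_free I ft); rewrite fy my.
- move=> C /grow_is_base_new [->|hC].
    have [k hk] := parent_base_reaches_root I (base_is_base I xE); exists k.+1.
    rewrite iterSr grow_parent_base_new.
    by rewrite (iter_parent_base_agree I grow_parent_base_old) ?(base_is_base I).
  have [k hk] := parent_base_reaches_root I hC.
  by exists k; rewrite (iter_parent_base_agree I grow_parent_base_old).
- move=> z z'; rewrite /= !in_setU1 => /orP [/eqP ->|zE].
    rewrite my' => -[<-] /orP [/eqP h|/(even_in_tree I) h]; first by rewrite h eqxx in yy'.
    by move: yS; rewrite h.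
  move=> hm /orP [/eqP zy|z'E].
    by subst z'; move: yS; rewrite -(mate_inj hm my) (even_in_tree I).
  change (base st' z = base st' z').
  by rewrite !grow_base_old ?(even_in_tree I) //; apply: (even_mates_same_base I).
Qed.

Lemma grow_scanned v w : scanned st' v w -> scanned st v w \/ (v = x /\ w = y).
Proof.
by apply: (@scanned_after_scan st st' x y A s [:: Scan y' _] hs) => // u B [[-> <-]|[]].
Qed.

Lemma grow_in_stack v B : List.In (Scan v B) (stack st') ->
  [\/ B = nonmatch_nbrs e mate v, v = x /\ B = A :\ y | List.In (Scan v B) s].
Proof.
apply: (@in_stack_after_scan st' x y A s [:: Scan y' (nonmatch_nbrs e mate y')] erefl).
by move=> u C [[-> <-]|[]].
Qed.

Section ScanInvariants.
Hypothesis J : scan_inv st.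

Let stack_old : stack_vertices st = x :: map frame_vertex s.
Proof. by rewrite /stack_vertices hs. Qed.

Lemma grow_ancestor_chain : ancestor_chain st' (stack_vertices st').
Proof.
have even_old g : g \in x :: map frame_vertex s -> g \in evn st.
  by rewrite -stack_old; apply: (stack_even I).
have chain_old : ancestor_chain st (x :: map frame_vertex s).
  by rewrite -stack_old; apply: (stack_ancestor_chain J).
rewrite grow_stack_vertices stack_old; split.
  move=> g hg; rewrite grow_base_new; apply: tree_anc_parent; rewrite grow_parent_base_new.
  change (tree_anc st' (base st' g) (base st x)).
  rewrite grow_base_old ?(even_in_tree I) ?even_old //.
  exact: grow_tree_anc_old (base_is_base I grow_x_even) (ancestor_chain_head chain_old hg).
apply: (ancestor_chain_transfer _ chain_old) => f g hf hg ha.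
rewrite !grow_base_old ?(even_in_tree I) ?even_old //.
exact: grow_tree_anc_old (base_is_base I (even_old _ hf)) ha.
Qed.

Lemma grow_scanned_even_edge v w : scanned st' v w -> w \in evn st' ->
  base st' w != base st' v ->
  w \notin done st' /\ (w \notin stack_vertices st' \/
    (tree_anc st' (base st' w) (base st' v) /\
     forall B, List.In (Scan w B) (stack st') -> v \in B)).
Proof.
move=> h wE0 hne0.
case: (grow_scanned h) => [h'|[_ wy]]; last first.
  move: wE0; rewrite wy /= in_setU1 (negbTE grow_neq) /= => /(even_in_tree I).
  by rewrite (negbTE yS).
have wS := scanned_in_tree J h'; have vE := scanned_even I h'; have vS := even_in_tree I vE.
have wE : w \in evn st by move: wE0; rewrite /= in_setU1 (negbTE (grow_neq_y' wS)).
have hne : base st w != base st v by rewrite -!grow_base_old.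
have [h1 h2] := scanned_even_edge J h' wE hne; split => //.
case: h2 => [h2|[h3 h4]].
  by left; rewrite grow_stack_vertices in_cons negb_or h2 andbT (grow_neq_y' wS).
right; split.
  change (tree_anc st' (base st' w) (base st' v)); rewrite !grow_base_old //.
  exact: grow_tree_anc_old (base_is_base I vE) h3.
move=> B /grow_in_stack [->|[wx ->]|hB].
- exact/nonmatch_nbrs_sym/h.1.
- have := h4 A; rewrite hs -wx => /(_ (or_introl erefl)) vA.
  by rewrite !inE vA (grow_neq_y vS).
- by apply: h4; rewrite hs; right.
Qed.

Lemma grow_scanned_odd_edge v w : scanned st' v w -> w \in inS st' ->
  w \notin evn st' -> forall g, g \in stack_vertices st' ->
  tree_anc st' (base st' g) (base st' (par st' w)) -> tree_anc st' (base st' g) (base st' v).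
Proof.
move=> h wS0 wE0 g.
case: (grow_scanned h) => [h'|[-> ->]]; last by rewrite /= /upd !inE eqxx.
have wS := scanned_in_tree J h'; have vE := scanned_even I h'.
have wE : w \notin evn st by move: wE0; rewrite /= in_setU1 negb_or => /andP [].
have pE := odd_par_even I wS wE; have pB := base_is_base I pE.
rewrite grow_par_old // (grow_base_old (even_in_tree I pE)).
rewrite (grow_base_old (even_in_tree I vE)) grow_stack_vertices in_cons.
case/orP => [/eqP ->|hg].
  (* y' is a fresh leaf, so it is an ancestor of no old blossom *)
  rewrite grow_base_new (tree_anc_agree I _ grow_parent_base_old pB).
  move=> /(tree_anc_is_base I pB) /andP [/(even_in_tree I)].
  by rewrite (negbTE grow_y'_notin_tree).
rewrite grow_base_old ?(even_in_tree I (stack_even I hg)) //.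
rewrite (tree_anc_agree I _ grow_parent_base_old pB) => ha.
exact: grow_tree_anc_old (base_is_base I vE) (scanned_odd_edge J h' wS wE hg ha).
Qed.

End ScanInvariants.

Lemma scan_inv_grow : scan_inv st -> scan_inv st'.
Proof.
move=> J; split.
- by move=> v w /grow_scanned [/(scanned_in_tree J) h|[_ ->]]; rewrite /= !inE ?h ?eqxx !orbT.
- exact: grow_ancestor_chain.
- exact: grow_scanned_even_edge.
- exact: grow_scanned_odd_edge.
Qed.

End GrowStep.

Section BlossomStep.
Variables (st : state T) (x : T) (A : {set T}) (s : seq (frame T)) (y : T) (bs us : seq T).
Hypotheses (I : forest_inv st) (hs : stack st = Scan x A :: s)
  (yS : y \in inS st) (yE : y \in evn st) (hch : tree_chain mate st x y bs us).

Let top := base st x.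
(* The base of a blossom after the step, as a function of its old base. *)
Let collapse C := if C \in bs then top else C.
Let merged := [set z | ((z \in evn st) && (base st z \in bs)) || (z \in us)].
Let st' := St (inS st) (evn st :|: [set u in us]) (upd (base st) merged (base st x))
              (par st) (cpv st) (called st) (done st) (todo st)
              ([seq Call i | i <- us] ++ Scan x (A :\ y) :: s).

Lemma blossom_stack_old : stack_vertices st = x :: map frame_vertex s.
Proof. by rewrite /stack_vertices hs. Qed.

Lemma blossom_x_even : x \in evn st.
Proof. by apply: (stack_even I); rewrite blossom_stack_old inE eqxx. Qed.

Lemma top_is_base : is_base st top.
Proof. exact: (base_is_base I blossom_x_even). Qed.

Lemma chain_size : size bs = (size us).+1.
Proof. by case: hch. Qed.

Lemma chain_head : nth y bs 0 = top.
Proof. by case: hch => _ _ h _ _; rewrite nth0. Qed.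

Lemma chain_parent_base i : i < size us -> parent_base st (nth y bs i.+1) = nth y bs i.
Proof. by case: hch => _ _ _ _ /[apply] -[hm _ hp _ _]; rewrite /parent_base hm. Qed.

Lemma iter_chain_top i : i < size bs -> iter i (parent_base st) (nth y bs i) = top.
Proof.
elim: i => [|i IH] hi; first exact: chain_head.
rewrite iterSr chain_parent_base; last by move: hi; rewrite chain_size.
exact/IH/ltnW.
Qed.

Lemma chain_anc_top C : C \in bs -> tree_anc st top C.
Proof.
move=> hC; exists (index C bs); rewrite -{2}(nth_index y hC).
by apply: iter_chain_top; rewrite index_mem.
Qed.

Lemma top_in_chain : top \in bs.
Proof. by rewrite -chain_head mem_nth // chain_size. Qed.

Lemma chain_mate C : C \in bs -> C != top ->
  exists j, [/\ j < size us, C = nth y bs j.+1 & mate C = Some (nth y us j)].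
Proof.
move=> hC hne; have hn : nth y bs (index C bs) = C by apply: nth_index.
have := index_mem C bs; rewrite hC; case: (index C bs) hn => [|j] hn hi.
  by rewrite chain_head in hn; rewrite hn eqxx in hne.
have jj : j < size us by rewrite -ltnS -chain_size.
exists j; rewrite -hn; split => //.
by case: hch => _ _ _ _ /(_ j jj) [].
Qed.

Lemma chain_parent_base_in C : C \in bs -> C != top -> parent_base st C \in bs.
Proof.
move=> hC hne; have [j [jj -> _]] := chain_mate hC hne.
by rewrite chain_parent_base // mem_nth // chain_size ltnW.
Qed.

Lemma chain_is_base C : C \in bs -> is_base st C.
Proof.
move=> hC; case: (eqVneq C top) => [->|hne]; first exact: top_is_base.
have [j [jj -> _]] := chain_mate hC hne.
by case: hch => _ _ _ _ /(_ j jj) [_ _ _ hE hb]; rewrite /is_base hE hb eqxx.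
Qed.

Lemma chain_odd u : u \in us -> [/\ u \in inS st, u \notin evn st,
  exists2 C, C \in bs & mate u = Some C & base st (par st u) \in bs].
Proof.
move=> hu; set j := index u us.
have jj : j < size us by rewrite index_mem.
have hn : nth y us j = u by apply: nth_index.
case: hch => _ _ _ _ /(_ j jj) [hm hodd hp _ _].
move: hodd; rewrite hn inE => /andP [uE uS]; split => //.
  by exists (nth y bs j.+1); [rewrite mem_nth // chain_size | apply: mate_sym; rewrite -hn].
by rewrite -hn hp mem_nth // chain_size ltnW.
Qed.

Lemma chain_odd_not_even u : u \in us -> u \notin evn st.
Proof. by case/chain_odd. Qed.

(* Otherwise the tree path would return to its top, and following parents from
   the top would cycle forever instead of reaching a root. *)
Lemma top_mate_notin_chain u : mate top = Some u -> u \notin us.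
Proof.
move=> hm; apply/negP => hu.
have [j [jj hn]] : exists j, j < size us /\ nth y us j = u.
  by exists (index u us); rewrite index_mem nth_index.
case: hch => _ _ _ _ /(_ j jj) [hm' _ _ _ _].
rewrite hn in hm'; have hB := mate_inj hm' hm.
have hper : iter j.+1 (parent_base st) top = top.
  by rewrite -{1}hB iter_chain_top // chain_size.
have [k hk] := parent_base_reaches_root I top_is_base.
have per n : iter (n * j.+1) (parent_base st) top = top.
  by elim: n => // n IH; rewrite mulSn iterD IH hper.
have : iter (k * j.+1) (parent_base st) top =
       iter (k * j.+1 - k) (parent_base st) (iter k (parent_base st) top).
  by rewrite -iterD subnK // leq_pmulr.
by rewrite per iter_parent_base_root // => h; rewrite -h hm in hk.
Qed.

Lemma blossom_base_even z : z \in evn st -> base st' z = collapse (base st z).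
Proof.
move=> zE; rewrite /= /upd /merged inE zE /=.
by rewrite (negbTE (contraL (@chain_odd_not_even z) _)) ?zE // orbF.
Qed.

Lemma blossom_base_odd u : u \in us -> base st' u = top.
Proof. by move=> hu; rewrite /= /upd /merged inE hu orbT. Qed.

Lemma collapse_top : collapse top = top.
Proof. by rewrite /collapse top_in_chain. Qed.

Lemma collapse_id C : (C \notin bs) || (C == top) -> collapse C = C.
Proof. by case/orP => [h|/eqP ->]; [rewrite /collapse (negbTE h) | exact: collapse_top]. Qed.

Lemma blossom_parent_base C : is_base st C -> (C \notin bs) || (C == top) ->
  parent_base st' (collapse C) = collapse (parent_base st C).
Proof.
move=> hC hor; rewrite collapse_id // /parent_base.
case: (base_mate I hC) => [->|[u -> /andP [uS uE]]]; first by rewrite collapse_id.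
exact/blossom_base_even/(odd_par_even I).
Qed.

Lemma collapse_parent_base C : C \in bs -> C != top ->
  collapse (parent_base st C) = collapse C.
Proof. by move=> hC hne; rewrite /collapse hC chain_parent_base_in. Qed.

Lemma tree_anc_collapse_iter k C : is_base st C ->
  tree_anc st' (collapse (iter k (parent_base st) C)) (collapse C).
Proof.
elim: k C => [|k IH] C hC; first exact: tree_anc_refl.
rewrite iterSr; have := IH _ (parent_base_is_base I hC).
case: (boolP ((C \notin bs) || (C == top))) => hor.
  by rewrite -blossom_parent_base // => h; apply: tree_anc_parent.
by move: hor; rewrite negb_or negbK => /andP [h1 h2]; rewrite collapse_parent_base.
Qed.

Lemma tree_anc_collapse A0 C : is_base st C -> tree_anc st A0 C ->
  tree_anc st' (collapse A0) (collapse C).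
Proof. by move=> hC [k <-]; apply: tree_anc_collapse_iter. Qed.

Lemma tree_anc_uncollapse F C : tree_anc st F top -> is_base st C ->
  tree_anc st' F (collapse C) -> tree_anc st F C.
Proof.
move=> hF hC [k hk]; elim: k C hC hk => [|k IH] C hC hk;
  case: (boolP (C \in bs)) => hb; try by apply: (tree_anc_trans hF); apply: chain_anc_top.
  by rewrite /= /collapse (negbTE hb) in hk; rewrite hk; apply: tree_anc_refl.
rewrite iterSr blossom_parent_base ?hb // in hk.
exact/tree_anc_parent/(IH _ (parent_base_is_base I hC) hk).
Qed.

Lemma blossom_is_base_new B : is_base st' B -> is_base st B /\ ((B \notin bs) || (B == top)).
Proof.
move=> /andP [BE /eqP Bb]; move: BE; rewrite /= inE => /orP [BE|].
  rewrite blossom_base_even // /collapse in Bb; move: Bb; case: ifP => hb Bb.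
    by subst; split; [exact: top_is_base | rewrite eqxx orbT].
  by split; [rewrite /is_base BE Bb eqxx | rewrite -Bb hb].
rewrite inE => hu; rewrite blossom_base_odd // in Bb; subst.
by move: (chain_odd_not_even hu); rewrite (andP top_is_base).1.
Qed.

Lemma blossom_is_base_old C : is_base st C -> (C \notin bs) || (C == top) -> is_base st' C.
Proof.
move=> /andP [CE /eqP Cb] hor; apply/andP; split; first by rewrite /= inE CE.
by rewrite blossom_base_even // Cb collapse_id.
Qed.

Lemma blossom_stack_vertices : stack_vertices st' = us ++ x :: map frame_vertex s.
Proof. by rewrite /stack_vertices /= map_cat -map_comp map_id. Qed.

Lemma blossom_scanned v w : scanned st' v w -> scanned st v w \/ (v = x /\ w = y).
Proof.
apply: (@scanned_after_scan st st' x y A s [seq Call i | i <- us] hs) => //.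
by move=> u B /List.in_map_iff [? []].
Qed.

Lemma blossom_in_stack w B : List.In (Scan w B) (stack st') ->
  (w = x /\ B = A :\ y) \/ List.In (Scan w B) s.
Proof.
by move=> /List.in_app_iff [/List.in_map_iff [? []] //|[[-> <-]|hB]]; [left | right].
Qed.

Lemma blossom_x_base : base st' x = top.
Proof. by rewrite blossom_base_even ?blossom_x_even // collapse_top. Qed.

Lemma blossom_y_base : base st' y = top.
Proof.
have hlast : last x bs \in bs by move: chain_size; case: (bs) => //= b l _; apply: mem_last.
by rewrite blossom_base_even // /collapse; case: hch => _ _ _ <- _; rewrite hlast.
Qed.

Lemma blossom_mate_base z C : z \in us -> mate z = Some C -> base st' z = base st' C.
Proof.
move=> hzu hm; have [_ _ [C' hC hmC] _] := chain_odd hzu; rewrite hm in hmC; case: hmC => ->.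
have /andP [CE /eqP Cb] := chain_is_base hC.
by rewrite (blossom_base_odd hzu) (blossom_base_even CE) /collapse Cb hC.
Qed.

Lemma forest_inv_blossom : forest_inv st'.
Proof.
case: (I) => *.
split => //.
- by move=> z; rewrite /= !inE => /orP [/(even_in_tree I) //|/chain_odd []].
- move=> z zE0; change (is_base st' (base st' z)).
  have : (z \in evn st) || (z \in us) by move: zE0; rewrite /= !inE.
  case/orP => [zE|hu]; last first.
    by rewrite blossom_base_odd // blossom_is_base_old ?eqxx ?orbT //; apply: top_is_base.
  rewrite blossom_base_even // /collapse; case: ifP => hb.
    by apply: blossom_is_base_old; [apply: top_is_base | rewrite eqxx orbT].
  by apply: blossom_is_base_old; [apply: (base_is_base I) | rewrite hb].
- move=> B /blossom_is_base_new [hB hor].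
  case: (base_mate I hB) => [->|[u hu /andP [uS uE]]]; first by left.
  right; exists u => //; rewrite uS /= !inE negb_or uE /=.
  case/orP: hor => [hnb|/eqP hB0]; last by subst; apply: top_mate_notin_chain.
  apply/negP => /chain_odd [_ _ [C hC hm] _]; move: (mate_sym hu); rewrite hm => -[hCB].
  by rewrite -hCB hC in hnb.
- by move=> u uS; rewrite /= !inE negb_or => /andP [uE _]; rewrite (odd_par_even I).
- by move=> z /(done_even I) h; rewrite /= inE h.
- move=> z; rewrite blossom_stack_vertices mem_cat /= !inE => /orP [->|hz]; first by rewrite orbT.
  by rewrite (stack_even I) // blossom_stack_old inE.
- move=> C /blossom_is_base_new [hC hor].
  have [k hk] := parent_base_reaches_root I hC; set R := iter k (parent_base st) C in hk.
  have hR : collapse R = R.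
    rewrite /collapse; case: ifP => // hRb; case: (eqVneq R top) => [//|hne].
    by have [j [_ _ hm]] := chain_mate hRb hne; rewrite hm in hk.
  have := tree_anc_collapse_iter k hC; rewrite -/R hR collapse_id // => -[k' hk'].
  by exists k'; rewrite hk'.
- move=> z z' zE0 hm z'E0; change (base st' z = base st' z').
  case: (boolP (z \in us)) => hzu; first exact: blossom_mate_base hm.
  case: (boolP (z' \in us)) => hz'u; first exact/esym/(blossom_mate_base hz'u)/mate_sym.
  have zE : z \in evn st by move: zE0; rewrite /= !inE (negbTE hzu) orbF.
  have z'E : z' \in evn st by move: z'E0; rewrite /= !inE (negbTE hz'u) orbF.
  by rewrite !blossom_base_even // (even_mates_same_base I zE hm z'E).
Qed.

Section ScanInvariants.
Hypothesis J : scan_inv st.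

Let stack_old_chain : ancestor_chain st (x :: map frame_vertex s).
Proof. by rewrite -blossom_stack_old; apply: (stack_ancestor_chain J). Qed.

Let stack_old_even g : g \in x :: map frame_vertex s -> g \in evn st.
Proof. by move=> hg; apply: (stack_even I); rewrite blossom_stack_old. Qed.

Lemma blossom_ancestor_chain : ancestor_chain st' (stack_vertices st').
Proof.
rewrite blossom_stack_vertices -cat1s catA.
apply: (ancestor_chain_cat (B := top)).
- move=> f; rewrite mem_cat => /orP [/blossom_base_odd //|].
  by rewrite inE => /eqP ->; apply: blossom_x_base.
- move=> g; rewrite -catA cat1s mem_cat => /orP [/blossom_base_odd ->|hg].
    exact: tree_anc_refl.
  rewrite blossom_base_even ?stack_old_even //.
  have := tree_anc_collapse top_is_base (ancestor_chain_head stack_old_chain hg).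
  by rewrite collapse_top.
- case: stack_old_chain => _; apply: ancestor_chain_transfer => f g hf hg ha.
  rewrite !blossom_base_even ?stack_old_even ?inE ?hf ?hg ?orbT //.
  by apply: tree_anc_collapse => //; apply/(base_is_base I)/stack_old_even; rewrite inE hf orbT.
Qed.

(* An edge vw scanned towards an odd vertex w of the tree path came from below
   b(x), by [scanned_odd_edge] applied to the active vertex x. *)
Lemma blossom_scanned_to_chain v w : scanned st v w -> w \in us ->
  w \notin done st' /\ (w \notin stack_vertices st' \/
    (tree_anc st' (base st' w) (base st' v) /\
     forall B, List.In (Scan w B) (stack st') -> v \in B)).
Proof.
move=> h' hwu; have [wS wE _ hp] := chain_odd hwu.
have vE := scanned_even I h'.
have ha : tree_anc st top (base st v).
  apply: (scanned_odd_edge J h' wS wE (g := x)); first by rewrite blossom_stack_old inE eqxx.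
  exact: chain_anc_top.
split; first by apply: contra wE => /(done_even I).
right; split.
  rewrite blossom_base_odd // blossom_base_even //.
  by have := tree_anc_collapse (base_is_base I vE) ha; rewrite collapse_top.
move=> B /blossom_in_stack [[wx _]|hB]; first by rewrite wx blossom_x_even in wE.
have hB' : List.In (Scan w B) (stack st) by rewrite hs; right.
by move: (stack_even I (frame_vertex_in hB')); rewrite (negbTE wE).
Qed.

Lemma blossom_scanned_even_edge v w : scanned st' v w -> w \in evn st' ->
  base st' w != base st' v ->
  w \notin done st' /\ (w \notin stack_vertices st' \/
    (tree_anc st' (base st' w) (base st' v) /\
     forall B, List.In (Scan w B) (stack st') -> v \in B)).
Proof.
move=> h wE0 hne.
case: (blossom_scanned h) => [h'|[vx wy]]; last first.
  by move: hne; rewrite vx wy blossom_x_base blossom_y_base eqxx.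
case: (boolP (w \in us)) => hwu; first exact: blossom_scanned_to_chain.
have vE := scanned_even I h'.
have wE : w \in evn st by move: wE0; rewrite /= !inE (negbTE hwu) orbF.
have nyx : ~ (v = y /\ w = x).
  by move=> [vy wx]; move: hne; rewrite vy wx blossom_x_base blossom_y_base eqxx.
have hne' : base st w != base st v.
  by apply: contra hne => /eqP h1; rewrite !blossom_base_even // h1.
have [h1 h2] := scanned_even_edge J h' wE hne'; split => //.
case: h2 => [h2|[h3 h4]].
  by left; rewrite blossom_stack_vertices mem_cat negb_or hwu /= -blossom_stack_old.
right; split.
  rewrite !blossom_base_even //.
  exact: tree_anc_collapse (base_is_base I vE) h3.
move=> B /blossom_in_stack [[wx hB]|hB]; last by apply: h4; rewrite hs; right.
subst w B; have := h4 A; rewrite hs => /(_ (or_introl erefl)) vA.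
by rewrite !inE vA andbT; apply/eqP => vy; apply: nyx.
Qed.

Lemma blossom_active_base g : g \in stack_vertices st' ->
  exists g', [/\ g' \in x :: map frame_vertex s, base st' g = base st g' &
                 collapse (base st g') = base st g'].
Proof.
have hx : x \in x :: map frame_vertex s by rewrite inE eqxx.
rewrite blossom_stack_vertices mem_cat => /orP [hgu|hg].
  by exists x; split; [| exact: blossom_base_odd | exact: collapse_top].
rewrite blossom_base_even ?stack_old_even // /collapse; case: ifP => hb.
  by exists x; split; [| | exact: collapse_top].
by exists g; rewrite hb.
Qed.

Lemma blossom_scanned_odd_edge v w : scanned st' v w -> w \in inS st' ->
  w \notin evn st' -> forall g, g \in stack_vertices st' ->
  tree_anc st' (base st' g) (base st' (par st' w)) -> tree_anc st' (base st' g) (base st' v).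
Proof.
move=> h wS wE0 g /blossom_active_base [g' [hg' -> hcol]].
have [wE hwu] : w \notin evn st /\ w \notin us.
  by move: wE0; rewrite /= !inE negb_or => /andP [].
case: (blossom_scanned h) => [h'|[_ wy]]; last by rewrite wy yE in wE.
have vE := scanned_even I h'; have pE := odd_par_even I wS wE.
rewrite (blossom_base_even pE) (blossom_base_even vE) -hcol => ha.
apply: tree_anc_collapse; first exact: (base_is_base I vE).
apply: (scanned_odd_edge J h' wS wE (g := g')); first by rewrite blossom_stack_old.
apply: (tree_anc_uncollapse _ (base_is_base I pE)); last by rewrite -{1}hcol.
exact: (ancestor_chain_head stack_old_chain hg').
Qed.

End ScanInvariants.

Lemma scan_inv_blossom : scan_inv st -> scan_inv st'.
Proof.
move=> J; split.
- by move=> v w /blossom_scanned [/(scanned_in_tree J) //|[_ ->]].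
- exact: blossom_ancestor_chain.
- exact: blossom_scanned_even_edge.
- exact: blossom_scanned_odd_edge.
Qed.

End BlossomStep.

Lemma inv_step st st' : find_ap_inv st -> step e mate st st' -> find_ap_inv st'.
Proof.
move=> I hst; case: hst I => {st st'}.
- move=> st f _ ft fc [I J].
  by split; [apply: forest_inv_root | apply: scan_inv_root].
- by move=> st f _ _ _; apply: inv_skip_root.
- by move=> st u s hs I; apply: inv_call hs.
- by move=> st x A s hs hA I; apply: inv_return hs hA.
- by move=> st x A s y P hs _ yS my _ yP _ I; apply: inv_augment hs yS my yP.
- move=> st x A s y y' hs _ yS my [I J].
  by split; [apply: forest_inv_grow | apply: scan_inv_grow].
- move=> st x A s y bs us hs _ yS yE hch merged [I J].
  by split; [apply: forest_inv_blossom | apply: scan_inv_blossom].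
- by move=> st x A s y hs _ yS hnc [I J]; apply: inv_nothing.
Qed.

Lemma reachable_inv st : reachable e mate st -> find_ap_inv st.
Proof. by elim=> [|st0 st1 _ IH hs]; [apply: inv_init | apply: inv_step IH hs]. Qed.

End FindApInvariants.

Theorem lemmaA4 (T : finType) (e : rel T) (mate : T -> option T)
  (e_sym : symmetric e) (e_irr : irreflexive e) (hM : is_matching e mate)
  (st : state T) (hst : reachable e mate st) (x y : T) :
  e x y -> x \in evn st -> y \in evn st ->
  x \in done st -> y \in done st ->
  base st x = base st y.
Proof.
have [I J] := reachable_inv e_sym e_irr hM hst.
exact: (scanned_done_same_base I J).
Qed.
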